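(* Let $G$ be a finite simple graph on vertex set $[n]$, $S=\mathbb{K}[x_1,\dots,x_n]$, $\mathcal{T}$ the set of triangles of $G$ (3-element vertex sets inducing $K_3$), and $M=\mathcal{F}(G)^{(2)}/\mathcal{F}(G)^2$ as a graded $\mathbb{K}$-vector space. Then for every integer $z$, $$H_M(z)=\sum_{T\in\mathcal{T}}H_{S_T/I_T}(z-3),$$ where $S_T=\mathbb{K}[x_v: v\in [n]\setminus N[T]]$, $I_T=\mathcal{F}(G-N[T])\subset S_T$, and $H_N(i)=\dim_{\mathbb{K}}N_i$ denotes the Hilbert function.
   Context: $\mathcal{F}(G)=(x_ix_j:\{i,j\}\in E(G))$. For squarefree monomial $I$, $I^{(2)}=\bigcap_{P\in\mathrm{Ass}(I)}P^2$. For $v$ a vertex, $N[v]=\{v\}\cup\{u:\{u,v\}\in E(G)\}$ is the closed neighborhood, and $N[A]=\bigcup_{v\in A}N[v]$. $G-N[T]$ denotes the induced subgraph of $G$ on the vertex set $[n]\setminus N[T]$. (If $[n]\setminus N[T]=\emptyset$ then $S_T=\mathbb{K}$ and $I_T=0$.) *)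

From HB Require Import structures.
From mathcomp Require Import all_boot all_order all_algebra.
From mathcomp Require Import mpoly.
From Stdlib Require Import ClassicalEpsilon.
Set Implicit Arguments. Unset Strict Implicit. Unset Printing Implicit Defensive.
Import GRing.Theory.
Local Open Scope ring_scope.

Section Defs.
Variables (K : fieldType) (n : nat).
Local Notation poly := {mpoly K[n]}.

Definition pset := poly -> Prop.

(* Ideal of the (sub)ring R generated by the set Gen (Gen and R inside S):
   finite sums  sum_k c_k * g_k  with c_k in R and g_k in Gen.
   With R = all of S this is the usual ideal (Gen) of S. *)
Definition ideal_gen (R : pset) (Gen : pset) : pset := fun p =>
  exists (cs gs : seq poly), size cs = size gs /\
    (forall c, c \in cs -> R c) /\ (forall g, g \in gs -> Gen g) /\
    p = \sum_(k < size gs) cs`_k * gs`_k.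

Definition whole : pset := fun _ => True.

Definition ideal_sq (J : pset) : pset :=
  ideal_gen whole (fun m => exists a b, J a /\ J b /\ m = a * b).

Definition is_ideal (P : pset) : Prop :=
  P 0 /\ (forall a b, P a -> P b -> P (a + b)) /\ (forall a r, P a -> P (r * a)).

Definition prime_ideal (P : pset) : Prop :=
  is_ideal P /\ ~ P 1 /\ (forall a b, P (a * b) -> P a \/ P b).

Definition Ass (I : pset) : pset -> Prop := fun P =>
  prime_ideal P /\ exists f : poly, forall g, P g <-> I (g * f).

Definition symb2 (I : pset) : pset := fun p =>
  forall P, Ass I P -> ideal_sq P p.

(* homogeneous of (integer) degree z (standard grading deg x_i = 1);
   for z < 0 only the zero polynomial. *)
Definition homog_z (z : int) (p : poly) : Prop :=
  exists d : nat, z = d%:Z /\ p \is d.-homog.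

Definition indep_mod (W : pset) (ps : seq poly) : Prop :=
  forall c : seq K, size c = size ps ->
    W (\sum_(k < size ps) c`_k *: ps`_k) -> forall k, c`_k = 0.

(* dim_K (V_z / W_z) = k, for W <= V graded *)
Definition has_qdim (V W : pset) (z : int) (k : nat) : Prop :=
  (exists ps : seq poly, size ps = k /\
     (forall p, p \in ps -> V p /\ homog_z z p) /\ indep_mod W ps) /\
  (forall ps : seq poly, (forall p, p \in ps -> V p /\ homog_z z p) ->
     indep_mod W ps -> (size ps <= k)%N).

Definition hilb (V W : pset) (z : int) : nat :=
  epsilon (inhabits 0%N) (has_qdim V W z).

Variable e : rel 'I_n.

Definition closed_nbhd (A : {set 'I_n}) : {set 'I_n} :=
  [set u | [exists v in A, (u == v) || e u v]].

Definition is_triangle (T : {set 'I_n}) : bool :=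
  (#|T| == 3)%N && [forall u in T, forall v in T, (u != v) ==> e u v].

Definition edge_gens (A : {set 'I_n}) : pset := fun m =>
  exists i j : 'I_n, [/\ i \in A, j \in A, e i j & m = 'X_i * 'X_j].

Definition edge_ideal : pset := ideal_gen whole (edge_gens setT).

(* S_T = K[x_v : v notin N[T]], realised as the subring of S of polynomials
   involving only the variables outside N[T]. *)
Definition subring_vars (A : {set 'I_n}) : pset := fun p =>
  forall m, m \in msupp p -> forall i, i \notin A -> (m i = 0)%N.

Definition S_T (T : {set 'I_n}) : pset := subring_vars (~: closed_nbhd T).
Definition I_T (T : {set 'I_n}) : pset :=
  ideal_gen (S_T T) (edge_gens (~: closed_nbhd T)).

End Defs.

(* Every ideal in the statement is spanned by monomials, so each Hilbert
   function counts standard monomials of a given degree.  F(G)^2 is spanned by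
   the monomials divisible by x_i x_j x_k x_l for edges ij and kl, and I_T by
   the monomials of S_T divisible by an edge of G - N[T].  For F(G)^(2): an
   associated prime contains F(G), hence two vertices of every triangle T, so
   its square contains x_T; conversely, for a maximal independent set J the
   prime generated by the variables outside J is (F(G) : x_J), and a monomial
   outside F(G)^2 of degree at least 2 outside every independent set is
   divisible by some x_T.  Hence the standard monomials of M are the monomials
   outside F(G)^2 divisible by some x_T; such a T is unique, and m |-> m / x_T
   is a bijection, lowering degrees by 3, onto the standard monomials of
   S_T / I_T. *)

From HB Require Import structures.
From mathcomp Require Import all_boot all_order all_algebra.
From mathcomp Require Import mpoly.
From mathcomp Require Import zify ring.
From Stdlib Require Import ClassicalEpsilon Classical.
Set Implicit Arguments. Unset Strict Implicit. Unset Printing Implicit Defensive.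
Import GRing.Theory.
Local Open Scope ring_scope.

Section MonomialSpan.
Variables (K : fieldType) (n : nat).
Local Notation poly := {mpoly K[n]}.
Implicit Types (p q r : poly) (m : 'X_{1..n}) (u v w : 'X_{1..n} -> Prop).

Definition mspan u : pset K n := fun p => forall m, m \in msupp p -> u m.

Definition mupclosed u := forall m1 m2, u m1 -> u (m2 + m1)%MM.

Lemma mspan0 u : mspan u 0.
Proof. by move=> m; rewrite msupp0. Qed.

Lemma mspanD u p q : mspan u p -> mspan u q -> mspan u (p + q).
Proof. by move=> hp hq m /msuppD_le; rewrite mem_cat => /orP[/hp|/hq]. Qed.

Lemma mspanZ u c p : mspan u p -> mspan u (c *: p).
Proof. by move=> hp m /msuppZ_le /hp. Qed.

Lemma mspanN u p : mspan u p -> mspan u (- p).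
Proof. by rewrite -scaleN1r; apply: mspanZ. Qed.

Lemma mspanX u m : u m -> mspan u 'X_[m].
Proof. by move=> hm m'; rewrite msuppX inE => /eqP ->. Qed.

Lemma mspan_sum u (I : Type) (r : seq I) (P : pred I) (F : I -> poly) :
  (forall i, P i -> mspan u (F i)) -> mspan u (\sum_(i <- r | P i) F i).
Proof. by move=> h; apply: big_ind; [exact: mspan0 | exact: mspanD |]. Qed.

Lemma mspanM u v w p q : mspan u p -> mspan v q ->
  (forall m1 m2, u m1 -> v m2 -> w (m1 + m2)%MM) -> mspan w (p * q).
Proof.
move=> hp hq huv m /msuppM_le /allpairsP [[m1 m2] /= [h1 h2 ->]].
by apply: huv; [apply: hp | apply: hq].
Qed.

Lemma mspanMl u r p : mupclosed u -> mspan u p -> mspan u (r * p).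
Proof. by move=> uc hp; apply: (mspanM (u := fun _ => True) _ hp) => // ? ? _ /uc. Qed.

Lemma mspan_ind (P : pset K n) p :
  P 0 -> (forall a b, P a -> P b -> P (a + b)) -> (forall c a, P a -> P (c *: a)) ->
  (forall m, m \in msupp p -> P 'X_[m]) -> P p.
Proof.
move=> P0 PD PZ PX; rewrite (mpolyE p) big_seq.
by apply: (big_ind P) => // m /PX; apply: PZ.
Qed.

Definition mproj (u : pred 'X_{1..n}) p := \sum_(m <- msupp p | u m) p@_m *: 'X_[m].

Lemma mspan_mproj (u : pred 'X_{1..n}) p : mspan u (mproj u p).
Proof. by apply: mspan_sum => m um; apply: mspanZ; apply: mspanX. Qed.

Lemma mproj_split (u : pred 'X_{1..n}) p : p = mproj u p + mproj (predC u) p.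
Proof. by rewrite {1}(mpolyE p) (bigID u) /=. Qed.

Section IdealGen.
Variables R Gen : pset K n.

Lemma ideal_gen_ind (Q : pset K n) p :
  Q 0 -> (forall a b, Q a -> Q b -> Q (a + b)) ->
  (forall c g, R c -> Gen g -> Q (c * g)) -> ideal_gen R Gen p -> Q p.
Proof.
move=> Q0 QD QM [cs [gs [hs [hc [hg ->]]]]].
apply: (big_ind Q) => // k _; apply: QM.
  by apply/hc/mem_nth; rewrite hs.
exact/hg/mem_nth.
Qed.

Lemma ideal_genE p : ideal_gen R Gen p <-> exists l : seq (poly * poly),
    (forall x, x \in l -> R x.1 /\ Gen x.2) /\ p = \sum_(x <- l) x.1 * x.2.
Proof.
split.
  move=> [cs [gs [hs [hc [hg ->]]]]]; exists (zip cs gs); split.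
    move=> x hx; split.
      by apply: hc; have := map_f fst hx; rewrite -/(unzip1 _) unzip1_zip ?hs.
    by apply: hg; have := map_f snd hx; rewrite -/(unzip2 _) unzip2_zip ?hs.
  rewrite (big_nth (0, 0)) big_mkord size_zip hs minnn.
  by apply: eq_bigr => k _; rewrite nth_zip.
move=> [l [hl ->]]; exists (unzip1 l), (unzip2 l); rewrite !size_map.
split=> //; split; first by move=> c /mapP [x /hl [? _] ->].
split; first by move=> g /mapP [x /hl [_ ?] ->].
rewrite (big_nth (0, 0)) big_mkord; apply: eq_bigr => k _.
by rewrite !(nth_map (0, 0)).
Qed.

Lemma ideal_gen0 : ideal_gen R Gen 0.
Proof. by apply/ideal_genE; exists [::]; rewrite big_nil. Qed.

Lemma ideal_genD a b :
  ideal_gen R Gen a -> ideal_gen R Gen b -> ideal_gen R Gen (a + b).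
Proof.
move=> /ideal_genE [l1 [h1 ->]] /ideal_genE [l2 [h2 ->]]; apply/ideal_genE.
exists (l1 ++ l2); rewrite big_cat; split=> // x.
by rewrite mem_cat => /orP [/h1|/h2].
Qed.

Lemma ideal_gen_mul c g : R c -> Gen g -> ideal_gen R Gen (c * g).
Proof.
move=> hc hg; apply/ideal_genE; exists [:: (c, g)]; rewrite big_seq1.
by split=> // x; rewrite inE => /eqP ->.
Qed.

Lemma ideal_genZ c a :
  (forall d, R d -> R (c *: d)) -> ideal_gen R Gen a -> ideal_gen R Gen (c *: a).
Proof.
move=> RZ /ideal_genE [l [hl ->]]; apply/ideal_genE.
exists [seq (c *: x.1, x.2) | x <- l]; split.
  by move=> x /mapP [y /hl [h1 h2] ->]; split => //; apply: RZ.
by rewrite big_map scaler_sumr; apply: eq_bigr => x _; rewrite scalerAl.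
Qed.

Lemma ideal_gen_mspan u : (forall c d, R d -> R (c *: d)) ->
  (forall c g, R c -> Gen g -> mspan u (c * g)) ->
  (forall m, u m -> ideal_gen R Gen 'X_[m]) ->
  forall p, ideal_gen R Gen p <-> mspan u p.
Proof.
move=> RZ hRG hu p; split.
  by apply: ideal_gen_ind; [exact: mspan0 | exact: mspanD | exact: hRG].
move=> hp; apply: mspan_ind; [exact: ideal_gen0 | exact: ideal_genD | |].
  by move=> c a; apply: ideal_genZ; apply: RZ.
by move=> m /hp /hu.
Qed.

End IdealGen.
End MonomialSpan.

(* The product of the parts of a and b supported outside u is nonzero, supported
   outside u, and yet lies in [mspan u]. *)
Lemma mspan_prime (K : fieldType) n (u : pred 'X_{1..n}) : mupclosed u -> ~~ u 0%MM ->
  (forall m1 m2, ~~ u m1 -> ~~ u m2 -> ~~ u (m1 + m2)%MM) -> prime_ideal (@mspan K n u).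
Proof.
move=> uc u0 uD; split; [split; [exact: mspan0 | split] | split].
- exact: mspanD.
- by move=> a r; apply: mspanMl.
- by move=> /(_ 0%MM); rewrite msupp1 inE eqxx => /(_ isT); apply/negP.
move=> a b hab; apply: NNPP => /not_or_and [na nb].
pose a1 := mproj u a; pose a0 := mproj (predC u) a.
pose b1 := mproj u b; pose b0 := mproj (predC u) b.
have nz (x : {mpoly K[n]}) : ~ mspan u x -> mproj (predC u) x != 0.
  move=> nx; apply/eqP => x0; apply: nx.
  by rewrite (mproj_split u x) x0 addr0; apply: mspan_mproj.
have ab0E : a0 * b0 = a * b - a1 * b - a0 * b1.
  by rewrite [a](mproj_split u a) [b](mproj_split u b) -/a1 -/a0 -/b1 -/b0; ring.
have ab0_u : mspan u (a0 * b0).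
  rewrite ab0E; apply: mspanD; first apply: mspanD => //.
    by apply: mspanN; rewrite mulrC; apply: mspanMl => //; apply: mspan_mproj.
  by apply: mspanN; apply: mspanMl => //; apply: mspan_mproj.
have ab0_notu : mspan (fun m => ~~ u m) (a0 * b0).
  pose nu m := ~~ u m; apply: (@mspanM _ _ nu nu nu); try exact: mspan_mproj.
  exact: uD.
have /mlead_supp lead_ab0 := mulf_neq0 (nz _ na) (nz _ nb).
by have := ab0_notu _ lead_ab0; rewrite /= (ab0_u _ lead_ab0).
Qed.

Lemma rows_dependent (F : fieldType) (k s : nat) (v : 'I_s -> 'rV[F]_k) :
  (k < s)%N -> exists2 c : 'I_s -> F, \sum_i c i *: v i = 0 & exists i, c i != 0.
Proof.
move=> lt_ks; pose X := [tuple v i | i < s].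
have /negP notfree : ~~ free X.
  apply: contraTN lt_ks => /eqP dimX; rewrite -leqNgt -{1}(size_tuple X) -dimX.
  by have := dimvS (subvf <<X>>%VS); rewrite dimvf dim_matrix mul1r.
apply: NNPP => nodep; apply/notfree/freeP => c sum0 i; apply: NNPP => ci.
apply: nodep; exists c; last by exists i; apply/eqP.
by rewrite -[RHS]sum0; apply: eq_bigr => j _; rewrite nth_mktuple.
Qed.

Section QuotientDimension.
Variables (K : fieldType) (n : nat).
Local Notation poly := {mpoly K[n]}.
Implicit Types (p : poly) (m : 'X_{1..n}) (u v : pred 'X_{1..n}).

Definition quot_basis u v d :=
  [pred b : 'X_{1..n < d.+1} | (mdeg b == d) && u b && ~~ v b].

Definition quot_dim u v (z : int) : nat :=
  if z is Posz d then #|quot_basis u v d| else 0%N.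

Lemma has_qdim_unique (V W : pset K n) z k1 k2 :
  has_qdim V W z k1 -> has_qdim V W z k2 -> k1 = k2.
Proof.
move=> [[ps1 [<- [h1 i1]]] u1] [[ps2 [<- [h2 i2]]] u2].
by apply/eqP; rewrite eqn_leq u1 ?u2.
Qed.

Lemma has_qdim_hilb (V W : pset K n) z k : has_qdim V W z k -> hilb V W z = k.
Proof.
move=> hk; apply: (has_qdim_unique _ hk).
exact: epsilon_spec (inhabits 0%N) (has_qdim V W z) (ex_intro _ k hk).
Qed.

Lemma homog_z_mspan (d : nat) p : homog_z d p -> mspan (fun m => mdeg m = d) p.
Proof. by move=> [d' [/eqP]]; rewrite eqz_nat => /eqP -> /dhomogP. Qed.

Lemma monomials_indep_mod v (ms : seq 'X_{1..n}) :
  uniq ms -> {in ms, forall m, ~~ v m} ->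
  indep_mod (mspan v) [seq 'X_[m] : poly | m <- ms].
Proof.
move=> ums hv c sc hW i; rewrite size_map in sc hW.
have [lt_i|ge_i] := ltnP i (size ms); last by rewrite nth_default ?sc.
set mi := nth 0%MM ms i.
have coefE : (\sum_(k < size ms) c`_k *: [seq 'X_[m] : poly | m <- ms]`_k)@_mi = c`_i.
  rewrite raddf_sum (bigD1 (Ordinal lt_i)) //= big1 ?addr0.
    by rewrite (nth_map 0%MM) // mcoeffZ mcoeffX eqxx mulr1.
  move=> j neq_ji; rewrite (nth_map 0%MM) // mcoeffZ mcoeffX nth_uniq //.
  by rewrite -val_eqE /= in neq_ji; rewrite (negbTE neq_ji) mulr0.
apply/eqP/negPn/negP => ci.
have /hW : mi \in msupp (\sum_(k < size ms) c`_k *: [seq 'X_[m] : poly | m <- ms]`_k).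
  by rewrite mcoeff_msupp coefE.
by apply/negP/hv/mem_nth.
Qed.

Lemma indep_mod_size_le u v (d : nat) (ps : seq poly) :
  {in ps, forall p, mspan u p /\ homog_z d p} -> indep_mod (mspan v) ps ->
  (size ps <= #|quot_basis u v d|)%N.
Proof.
move=> hps hind; rewrite leqNgt; apply/negP => /rows_dependent.
set S := quot_basis u v d.
move=> /(_ K (fun i => \row_(j < #|S|) (ps`_i)@_(val (enum_val j)))) [c sum0 [i0 ci0]].
pose cs := [seq c i | i <- enum 'I_(size ps)].
have csE (i : 'I_(size ps)) : cs`_i = c i by rewrite (nth_map i) ?size_enum_ord ?nth_ord_enum.
have /hind hcs : mspan v (\sum_(k < size ps) cs`_k *: ps`_k).
  have hsum : mspan (fun m => u m /\ mdeg m = d) (\sum_(k < size ps) cs`_k *: ps`_k).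
    apply: mspan_sum => k _; apply: mspanZ => m m_supp.
    have [hu /homog_z_mspan hd] := hps _ (mem_nth 0 (ltn_ord k)).
    by split; [apply: hu | apply: hd].
  move=> m m_supp; have [um dm] := hsum m m_supp; apply/negPn/negP => vm.
  have dm_lt : (mdeg m < d.+1)%N by rewrite dm.
  have bS : BMultinom dm_lt \in S by rewrite inE /= dm eqxx um.
  move: m_supp; rewrite mcoeff_msupp => /negP; apply.
  have := congr1 (fun M : 'rV_#|S| => M 0 (enum_rank_in bS (BMultinom dm_lt))) sum0.
  rewrite summxE mxE => sum0_j; rewrite -[X in _ == X]sum0_j raddf_sum /=.
  by apply/eqP; apply: eq_bigr => i _; rewrite mcoeffZ csE !mxE enum_rankK_in.
by move: ci0; rewrite -csE hcs ?eqxx // size_map size_enum_ord.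
Qed.

Lemma has_qdim_mspan (V W : pset K n) u v z :
  (forall p, V p <-> mspan u p) -> (forall p, W p <-> mspan v p) ->
  has_qdim V W z (quot_dim u v z).
Proof.
move=> hV hW; have hind ps : indep_mod W ps <-> indep_mod (mspan v) ps.
  by split=> h c sc hc; apply: h sc _; apply/hW.
case: z => [d|d]; split.
- exists [seq 'X_[val b] | b <- enum (quot_basis u v d)].
  rewrite size_map -cardE; split=> //; split; last first.
    apply/hind; rewrite map_comp; apply: monomials_indep_mod.
      by rewrite map_inj_uniq ?enum_uniq //; apply: val_inj.
    by move=> m /mapP [b]; rewrite mem_enum => /andP [_ vb] ->.
  move=> p /mapP [b]; rewrite mem_enum => /andP [/andP [db ub] _] ->.
  split; first by apply/hV; apply: mspanX.
  by exists d; split=> //; rewrite dhomogX.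
- move=> ps hps /hind; apply: indep_mod_size_le => p /hps [/hV].
  by split.
- exists [::]; split=> //; split=> // -[|? ?] //= _ _ k; exact: nth_nil.
- by move=> [|p ps] // /(_ p (mem_head _ _)) [_ [? []]].
Qed.

Lemma hilb_mspan (V W : pset K n) u v z :
  (forall p, V p <-> mspan u p) -> (forall p, W p <-> mspan v p) ->
  hilb V W z = quot_dim u v z.
Proof. by move=> hV hW; apply/has_qdim_hilb/has_qdim_mspan. Qed.

End QuotientDimension.

Lemma lepm_add n (m1 m2 m3 m4 : 'X_{1..n}) :
  (m1 <= m3)%MM -> (m2 <= m4)%MM -> (m1 + m2 <= m3 + m4)%MM.
Proof.
move=> /mnm_lepP h13 /mnm_lepP h24; apply/mnm_lepP => i.
by rewrite !mnmDE leq_add.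
Qed.

Section GraphMonomials.
Variables (n : nat) (e : rel 'I_n).
Implicit Types (m : 'X_{1..n}) (i j : 'I_n) (A T : {set 'I_n}).
Local Notation N T := (closed_nbhd e T).

Definition edge_mnm i j : 'X_{1..n} := (U_(i) + U_(j))%MM.

Definition set_mnm A : 'X_{1..n} := [multinom (i \in A : nat) | i < n].

Definition edge_div m := [exists i, exists j, e i j && (edge_mnm i j <= m)%MM].

Definition edge2_div m := [exists i, exists j, exists k, exists l,
  [&& e i j, e k l & (edge_mnm i j + edge_mnm k l <= m)%MM]].

Definition triangle_div m := [exists T, is_triangle e T && (set_mnm T <= m)%MM].

Definition symb2_div m := edge2_div m || triangle_div m.

Definition nbhd_free T m := [forall i in N T, m i == 0%N].

Definition outer_edge_div T m := nbhd_free T m &&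
  [exists i, exists j,
     [&& i \notin N T, j \notin N T, e i j & (edge_mnm i j <= m)%MM]].

Lemma edge_mnmE i j k : edge_mnm i j k = ((i == k) + (j == k))%N.
Proof. by rewrite mnmDE !mnm1E. Qed.

Lemma set_mnmE A i : set_mnm A i = (i \in A).
Proof. by rewrite mnmE. Qed.

Lemma edge_divP m :
  reflect (exists i j, e i j /\ (edge_mnm i j <= m)%MM) (edge_div m).
Proof.
apply: (iffP existsP) => [[i /existsP [j /andP [eij le_m]]] | [i [j [eij le_m]]]].
  by exists i, j.
by exists i; apply/existsP; exists j; rewrite eij.
Qed.

Lemma edge2_divP m : reflect (exists i j k l,
    [/\ e i j, e k l & (edge_mnm i j + edge_mnm k l <= m)%MM]) (edge2_div m).
Proof.
apply: (iffP existsP) => [[i /existsP [j /existsP [k /existsP [l /and3P h]]]] |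
                          [i [j [k [l [eij ekl le_m]]]]]].
  by exists i, j, k, l.
by exists i; apply/existsP; exists j; apply/existsP; exists k; apply/existsP; exists l;
  apply/and3P.
Qed.

Lemma triangle_divP m :
  reflect (exists2 T, is_triangle e T & (set_mnm T <= m)%MM) (triangle_div m).
Proof.
apply: (iffP existsP) => [[T /andP [] ] | [T tT le_m]]; first by exists T.
by exists T; rewrite tT.
Qed.

Lemma nbhd_freeP T m : reflect {in N T, forall i, m i = 0%N} (nbhd_free T m).
Proof. by apply: (iffP forall_inP) => h i /h /eqP. Qed.

Lemma outer_edge_divP T m : reflect (nbhd_free T m /\ exists i j,
    [/\ i \notin N T, j \notin N T, e i j & (edge_mnm i j <= m)%MM])
  (outer_edge_div T m).
Proof.
apply: (iffP andP) => [[hT /existsP [i /existsP [j /and4P h]]] | [hT [i [j h]]]].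
  by split=> //; exists i, j.
by split=> //; apply/existsP; exists i; apply/existsP; exists j; apply/and4P.
Qed.

Lemma edge_div_up : mupclosed edge_div.
Proof.
move=> m1 m2 /edge_divP [i [j [eij le_m]]]; apply/edge_divP; exists i, j.
by split=> //; apply: lepm_trans le_m (lem_addl _ _).
Qed.

Lemma edge2_div_up : mupclosed edge2_div.
Proof.
move=> m1 m2 /edge2_divP [i [j [k [l [eij ekl le_m]]]]]; apply/edge2_divP.
by exists i, j, k, l; split=> //; apply: lepm_trans le_m (lem_addl _ _).
Qed.

Lemma nbhd_freeD T m1 m2 :
  nbhd_free T (m1 + m2)%MM = nbhd_free T m1 && nbhd_free T m2.
Proof.
apply/nbhd_freeP/andP => [h | [/nbhd_freeP h1 /nbhd_freeP h2] i iN].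
  by split; apply/nbhd_freeP => i /h; rewrite mnmDE; lia.
by rewrite mnmDE h1 ?h2.
Qed.

Lemma nbhd_free_le T m1 m2 : (m1 <= m2)%MM -> nbhd_free T m2 -> nbhd_free T m1.
Proof. by move=> /submK <-; rewrite nbhd_freeD => /andP []. Qed.

Lemma nbhd_free_edge T i j : i \notin N T -> j \notin N T -> nbhd_free T (edge_mnm i j).
Proof.
move=> iN jN; apply/nbhd_freeP => k kN; rewrite edge_mnmE.
have /negbTE -> : i != k by apply: contraNneq iN => ->.
by have /negbTE -> : j != k by apply: contraNneq jN => ->.
Qed.

End GraphMonomials.

Section EdgeIdeals.
Variables (K : fieldType) (n : nat) (e : rel 'I_n).
Local Notation poly := {mpoly K[n]}.
Implicit Types (p : poly) (m : 'X_{1..n}) (i j : 'I_n) (T : {set 'I_n}).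

Lemma mpolyX_edge i j : 'X_i * 'X_j = 'X_[edge_mnm i j] :> poly.
Proof. by rewrite mpolyXD. Qed.

Lemma mpolyX_split m m' : (m' <= m)%MM -> 'X_[m] = 'X_[m - m'] * 'X_[m'] :> poly.
Proof. by move=> h; rewrite -mpolyXD submK. Qed.

Lemma edge_idealE p : edge_ideal e p <-> mspan (edge_div e) p.
Proof.
apply: ideal_gen_mspan => // [c _ _ [i [j [_ _ eij ->]]] | m /edge_divP [i [j [eij le_m]]]].
  rewrite mpolyX_edge; apply: mspanMl; first exact: edge_div_up.
  by apply: mspanX; apply/edge_divP; exists i, j; rewrite lepm_refl.
rewrite (mpolyX_split le_m) -mpolyX_edge; apply: ideal_gen_mul => //.
by exists i, j; rewrite !inE.
Qed.

Lemma edge_ideal_mpolyX i j : e i j -> @edge_ideal K n e 'X_[edge_mnm i j].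
Proof.
move=> eij; apply/edge_idealE; apply: mspanX; apply/edge_divP.
by exists i, j; rewrite lepm_refl.
Qed.

Lemma edge_ideal_sqE p : ideal_sq (edge_ideal e) p <-> mspan (edge2_div e) p.
Proof.
apply: ideal_gen_mspan => // [c _ _ [a [b [/edge_idealE ha [/edge_idealE hb ->]]]] |].
  apply: mspanMl; first exact: edge2_div_up.
  apply: mspanM ha hb _ => m1 m2 /edge_divP [i [j [eij h1]]] /edge_divP [k [l [ekl h2]]].
  by apply/edge2_divP; exists i, j, k, l; rewrite lepm_add.
move=> m /edge2_divP [i [j [k [l [eij ekl le_m]]]]].
rewrite (mpolyX_split le_m) mpolyXD; apply: ideal_gen_mul => //.
by exists 'X_[edge_mnm i j], 'X_[edge_mnm k l]; split; [|split]; try exact: edge_ideal_mpolyX.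
Qed.

Lemma S_TE T p : S_T e T p <-> mspan (nbhd_free e T) p.
Proof.
split=> h m /h hm; first by apply/nbhd_freeP => i iN; apply: hm; rewrite inE iN.
by move=> i; rewrite inE negbK; apply/nbhd_freeP.
Qed.

Lemma I_TE T p : I_T e T p <-> mspan (outer_edge_div e T) p.
Proof.
apply: ideal_gen_mspan => [c d /S_TE hd | c _ /S_TE hc [i [j [iN jN eij ->]]] | m].
- by apply/S_TE; apply: mspanZ.
- rewrite !in_setC in iN jN; rewrite mpolyX_edge.
  apply: (mspanM hc (mspanX (u := eq^~ (edge_mnm i j)) erefl)) => m1 _ h1 ->.
  apply/outer_edge_divP; rewrite nbhd_freeD h1 nbhd_free_edge //; split=> //.
  by exists i, j; rewrite lem_addl.
move=> /outer_edge_divP [hT [i [j [iN jN eij le_m]]]].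
rewrite (mpolyX_split le_m) -mpolyX_edge; apply: ideal_gen_mul; last first.
  by exists i, j; rewrite !in_setC.
by apply/S_TE; apply: mspanX; apply: nbhd_free_le hT; apply: lem_subr.
Qed.

End EdgeIdeals.

(* Proves [(edge_mnm _ _ + ... <= m)%MM] from positivity and multiplicity facts
   about [m] and vertex disequalities in the context. *)
Ltac mnm_le_tac := apply/mnm_lepP => ?; rewrite ?mnmDE ?edge_mnmE ?mnm1E;
  repeat (case: eqP => [?|?]; subst => /=); try congruence; lia.

Section GraphCombinatorics.
Variables (n : nat) (e : rel 'I_n).
Hypotheses (e_sym : ssrbool.symmetric e) (e_irr : irreflexive e).
Implicit Types (m : 'X_{1..n}) (a b c i j v w x y : 'I_n) (A C D I T : {set 'I_n}).
Local Notation N T := (closed_nbhd e T).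

Lemma edge_neq x y : e x y -> x <> y.
Proof. by move=> exy exy'; rewrite exy' e_irr in exy. Qed.

Lemma not_edge2_div_le m a b c x : ~~ edge2_div e m -> e a b -> e c x ->
  ~ (edge_mnm a b + edge_mnm c x <= m)%MM.
Proof.
by move=> /negP no_edge2 eab ecx le_m; apply/no_edge2/edge2_divP; exists a, b, c, x.
Qed.

Lemma set_mnm_leP A m : reflect {in A, forall i, 0 < m i}%N (set_mnm A <= m)%MM.
Proof.
apply: (iffP mnm_lepP) => [h i iA | h i]; first by have := h i; rewrite set_mnmE iA.
by rewrite set_mnmE; case: (boolP (i \in A)) => // /h.
Qed.

Lemma edge_mnm_le m i j : i <> j -> (0 < m i)%N -> (0 < m j)%N -> (edge_mnm i j <= m)%MM.
Proof. by move=> ij mi mj; mnm_le_tac. Qed.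

Lemma edge_mnm_le_gt0 m i j : (edge_mnm i j <= m)%MM -> (0 < m i)%N /\ (0 < m j)%N.
Proof.
move=> /mnm_lepP le_m; split; [move: (le_m i) | move: (le_m j)];
  rewrite edge_mnmE eqxx; lia.
Qed.

Lemma mem_nbhd T i : i \in T -> i \in N T.
Proof. by move=> iT; rewrite inE; apply/existsP; exists i; rewrite iT eqxx. Qed.

Lemma nbhd_edge T i t : t \in T -> e i t -> i \in N T.
Proof. by move=> tT eit; rewrite inE; apply/existsP; exists t; rewrite tT eit orbT. Qed.

Lemma triangle3 a b c : e a b -> e b c -> e a c -> is_triangle e [set a; b; c].
Proof.
move=> eab ebc eac; have /eqP ab := edge_neq eab.
have /eqP bc := edge_neq ebc; have /eqP ac := edge_neq eac.
apply/andP; split.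
  by rewrite -setUA !cardsU1 cards1 !inE negb_or ab ac bc.
apply/forallP => x; apply/implyP; rewrite !inE -orbA => hx.
apply/forallP => y; apply/implyP; rewrite !inE -orbA => hy; apply/implyP.
by case/or3P: hx => /eqP ->; case/or3P: hy => /eqP ->; rewrite ?eqxx // e_sym.
Qed.

Lemma triangleP T : is_triangle e T ->
  exists a b c, [/\ e a b, e b c, e a c & T = [set a; b; c]].
Proof.
move=> /andP [/eqP cT /forall_inP tri].
have eT x y : x \in T -> y \in T -> x != y -> e x y.
  by move=> xT yT; move: (tri x xT) => /forall_inP /(_ y yT) /implyP.
have [a [b [c [[aT bT cT'] [ab bc ca]]]]] : exists a b c,
    [/\ a \in T, b \in T & c \in T] /\ [/\ a != b, b != c & c != a].
  by apply/card_gt2P; rewrite cT.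
exists a, b, c; split; rewrite ?eT // 1?eq_sym //.
have sub : [set a; b; c] \subset T.
  by apply/subsetP => x; rewrite !inE -orbA => /or3P [] /eqP ->.
apply/esym/eqP; rewrite eqEcard sub cT -setUA !cardsU1 cards1 !inE negb_or.
by rewrite ab bc eq_sym ca.
Qed.

Lemma triangle_supp T m : is_triangle e T -> (set_mnm T <= m)%MM ->
  exists a b c, [/\ e a b, e b c, e a c & T = [set a; b; c]] /\
                [/\ 0 < m a, 0 < m b & 0 < m c]%N.
Proof.
move=> /triangleP [a [b [c [eab ebc eac Tabc]]]] /set_mnm_leP inT.
by exists a, b, c; split=> //; split; apply: inT; rewrite Tabc !inE eqxx ?orbT.
Qed.

Definition indep I := [forall i in I, forall j in I, ~~ e i j].

Definition mnm_supp m := [set i | 0 < m i]%N.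

Definition mdeg_on C m := (\sum_(i in C) m i)%N.

Lemma mdeg_onD C m1 m2 : mdeg_on C (m1 + m2)%MM = (mdeg_on C m1 + mdeg_on C m2)%N.
Proof. by rewrite /mdeg_on -big_split; apply: eq_bigr => i _; rewrite mnmDE. Qed.

Lemma leq_mdeg_on C m i : i \in C -> (m i <= mdeg_on C m)%N.
Proof. by move=> iC; rewrite /mdeg_on (bigD1 i) //= leq_addr. Qed.

Lemma mdeg_onS C D m : C \subset D -> (mdeg_on C m <= mdeg_on D m)%N.
Proof.
move=> /subsetP sCD; rewrite /mdeg_on !(big_mkcond (fun i => i \in _)).
by apply: leq_sum => i _; case: ifP => // /sCD ->.
Qed.

Lemma mdeg_on_le C m1 m2 : (m1 <= m2)%MM -> (mdeg_on C m1 <= mdeg_on C m2)%N.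
Proof. by move=> /mnm_lepP le_m; apply: leq_sum. Qed.

Lemma mdeg_on_gt0 C m : (0 < mdeg_on C m)%N -> exists2 i, i \in C & (0 < m i)%N.
Proof.
move=> h; apply: NNPP => hno; move: h; rewrite /mdeg_on big1 // => i iC.
by apply/eqP; rewrite -leqn0 leqNgt; apply/negP => hi; apply: hno; exists i.
Qed.

Lemma mdeg_on_supp A m : mdeg_on (~: (mnm_supp m :\: A)) m = mdeg_on A m.
Proof.
rewrite /mdeg_on !(big_mkcond (fun i => i \in _)); apply: eq_bigr => i _.
by rewrite !inE; case: (m i) => [|k] /=; rewrite ?if_same ?andbT ?negbK.
Qed.

Lemma mdeg_set_mnm A : mdeg (set_mnm A) = #|A|.
Proof.
rewrite mdegE -sum1_card [RHS]big_mkcond /=.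
by apply: eq_bigr => i _; rewrite set_mnmE; case: (i \in A).
Qed.

Lemma mdeg_triangle T : is_triangle e T -> mdeg (set_mnm T) = 3%N.
Proof. by move=> /andP [/eqP <- _]; apply: mdeg_set_mnm. Qed.

Lemma mdeg_on_set_mnm T : mdeg_on T (set_mnm T) = #|T|.
Proof. by rewrite /mdeg_on -sum1_card; apply: eq_bigr => i iT; rewrite set_mnmE iT. Qed.

Lemma mdeg_onU C k : mdeg_on C U_(k) = (k \in C).
Proof.
rewrite /mdeg_on (eq_bigr (fun l => (k == l) : nat)) => [|l _]; last by rewrite mnm1E.
case: (boolP (k \in C)) => kC; last first.
  by rewrite big1 // => l lC; case: eqP => // kl; rewrite kl lC in kC.
by rewrite (bigD1 k) //= eqxx big1 // => l /andP [_ /negbTE]; rewrite eq_sym => ->.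
Qed.

Lemma mdeg_on_edge_mnm C i j : i \in C -> j \in C -> mdeg_on C (edge_mnm i j) = 2%N.
Proof. by move=> iC jC; rewrite mdeg_onD !mdeg_onU iC jC. Qed.

Section CoverDegree.
Variable m : 'X_{1..n}.
Hypothesis no_edge2 : ~~ edge2_div e m.
Hypothesis cover_deg : forall I, indep I -> (1 < mdeg_on (~: I) m)%N.

Lemma supp_edge : exists a b, [/\ e a b, 0 < m a & 0 < m b]%N.
Proof.
apply: NNPP => no_edge.
have /cover_deg : indep (mnm_supp m).
  apply/forall_inP => a; rewrite inE => ma; apply/forall_inP => b; rewrite inE => mb.
  by apply/negP => eab; apply: no_edge; exists a, b.
by rewrite -(setD0 (mnm_supp m)) mdeg_on_supp /mdeg_on big_set0.
Qed.

Lemma leaf_mult_gt1 x y : e x y -> (0 < m x)%N -> (0 < m y)%N ->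
  (forall c, 0 < m c -> e y c -> c = x)%N -> (1 < m x)%N.
Proof.
move=> exy mx my leaf; have xy := edge_neq exy.
have /cover_deg : indep (mnm_supp m :\ x).
  apply/forall_inP => a; rewrite !inE => /andP [/eqP ax ma].
  apply/forall_inP => b; rewrite !inE => /andP [/eqP bx mb]; apply/negP => eab.
  have ab := edge_neq eab.
  have [ay | /eqP ay] := eqVneq a y; first by apply: bx; apply: leaf; rewrite -?ay.
  have [by_ | /eqP by_] := eqVneq b y; first by apply: ax; apply: leaf; rewrite -?by_ 1?e_sym.
  by apply: (not_edge2_div_le no_edge2 exy eab); mnm_le_tac.
by rewrite mdeg_on_supp /mdeg_on big_set1.
Qed.

(* The edges inside the support pairwise meet, so they form a triangle or a
   star; at a leaf of a star the degree bound forces an edge counted twice. *)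
Lemma cover_deg_triangle_div : triangle_div e m.
Proof.
have [a [b [eab ma mb]]] := supp_edge; have ab := edge_neq eab.
have [c /and3P [eac ebc mc] | no_common] := pickP [pred c | [&& e a c, e b c & 0 < m c]%N].
  apply/triangle_divP; exists [set a; b; c]; first exact: triangle3.
  by apply/set_mnm_leP => i; rewrite !inE -orbA => /or3P [] /eqP ->.
have other_nbr x y : e x y -> (0 < m x)%N -> (0 < m y)%N ->
    (1 < m x)%N \/ exists c, [/\ 0 < m c, e y c & c <> x]%N.
  move=> exy mx my; apply: NNPP => /not_or_and [leaf /not_ex_all_not other].
  apply: leaf; apply: (leaf_mult_gt1 exy mx my) => c mc eyc.
  by apply: NNPP => cx; apply: (other c).
have eba : e b a by rewrite e_sym.
exfalso; case: (other_nbr _ _ eab ma mb) => [ma2 | [d [md ebd da]]];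
  case: (other_nbr _ _ eba mb ma) => [mb2 | [c [mc eac cb]]].
- by apply: (not_edge2_div_le no_edge2 eab eab); mnm_le_tac.
- have ac := edge_neq eac.
  by apply: (not_edge2_div_le no_edge2 eab eac); mnm_le_tac.
- have bd := edge_neq ebd.
  by apply: (not_edge2_div_le no_edge2 eba ebd); mnm_le_tac.
- have ac := edge_neq eac; have bd := edge_neq ebd.
  have cd : c <> d by move=> cd; move: (no_common c); rewrite /= eac mc cd ebd.
  by apply: (not_edge2_div_le no_edge2 eac ebd); mnm_le_tac.
Qed.

End CoverDegree.

Section TriangleDivisor.
Variables (m : 'X_{1..n}) (T : {set 'I_n}).
Hypotheses (no_edge2 : ~~ edge2_div e m) (tT : is_triangle e T).
Hypothesis le_Tm : (set_mnm T <= m)%MM.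

Lemma triangle_supp_edge v w : e v w -> (0 < m v)%N -> (0 < m w)%N -> v \in T.
Proof.
move=> evw mv mw; apply: contraT => vT; exfalso; have vw := edge_neq evw.
have [a [b [c [[eab ebc eac Tabc] [ma mb mc]]]]] := triangle_supp tT le_Tm.
move: vT; rewrite Tabc !inE => /norP [/norP [/eqP va /eqP vb] /eqP vc].
have ab := edge_neq eab; have bc := edge_neq ebc; have ac := edge_neq eac.
have [wa | /eqP wa] := eqVneq w a.
  by apply: (not_edge2_div_le no_edge2 evw ebc); subst; mnm_le_tac.
have [wb | /eqP wb] := eqVneq w b.
  by apply: (not_edge2_div_le no_edge2 evw eac); subst; mnm_le_tac.
by apply: (not_edge2_div_le no_edge2 evw eab); mnm_le_tac.
Qed.

Lemma triangle_mult_le1 v : v \in T -> (m v <= 1)%N.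
Proof.
have [a [b [c [[eab ebc eac ->] [ma mb mc]]]]] := triangle_supp tT le_Tm.
have ab := edge_neq eab; have bc := edge_neq ebc; have ac := edge_neq eac.
have eba : e b a by rewrite e_sym.
have ecb : e c b by rewrite e_sym.
have eca : e c a by rewrite e_sym.
rewrite !inE -orbA leqNgt => /or3P [] /eqP ->; apply/negP => mv.
- by apply: (not_edge2_div_le no_edge2 eab eac); mnm_le_tac.
- by apply: (not_edge2_div_le no_edge2 eba ebc); mnm_le_tac.
- by apply: (not_edge2_div_le no_edge2 eca ecb); mnm_le_tac.
Qed.

Lemma triangle_div_uniq T' : is_triangle e T' -> (set_mnm T' <= m)%MM -> T' = T.
Proof.
move=> tT' le_T'm; apply/eqP; rewrite eqEcard.
move: (tT) (tT') => /andP [/eqP -> _] /andP [/eqP -> _]; rewrite andbT.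
have [a [b [c [[eab ebc eac ->] [ma mb mc]]]]] := triangle_supp tT' le_T'm.
apply/subsetP => v; rewrite !inE -orbA => /or3P [] /eqP ->.
- exact: (triangle_supp_edge eab).
- exact: (triangle_supp_edge ebc).
- by apply: (triangle_supp_edge _ mc ma); rewrite e_sym.
Qed.

End TriangleDivisor.

Lemma shift_nbhd_free T m : is_triangle e T -> ~~ edge2_div e (m + set_mnm T)%MM ->
  nbhd_free e T m && ~~ outer_edge_div e T m.
Proof.
move=> tT no_edge2; have le_T := lem_addl m (set_mnm T).
have mT v : (m + set_mnm T)%MM v = (m v + (v \in T))%N by rewrite mnmDE set_mnmE.
have inT v w : e v w -> (0 < m v)%N -> (0 < m w + (w \in T))%N -> v \in T.
  by move=> evw mv mw; apply: (triangle_supp_edge no_edge2 tT le_T evw); rewrite mT; lia.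
apply/andP; split.
  apply/nbhd_freeP => i; rewrite inE => /existsP [t /andP [tT' /predU1P [-> | eit]]].
    by have := triangle_mult_le1 no_edge2 tT le_T tT'; rewrite mT tT'; lia.
  case: (boolP (i \in T)) => iT.
    by have := triangle_mult_le1 no_edge2 tT le_T iT; rewrite mT iT; lia.
  apply/eqP; apply: contraNT iT; rewrite -lt0n => mi.
  by apply: (inT _ t eit); rewrite ?tT'; lia.
apply/negP => /outer_edge_divP [_ [i [j [iN jN eij /edge_mnm_le_gt0 [mi mj]]]]].
by case/negP: iN; apply/mem_nbhd/(inT _ _ eij mi); lia.
Qed.

Lemma shift_edge_in_triangle T m v w : nbhd_free e T m -> ~~ outer_edge_div e T m ->
  e v w -> (edge_mnm v w <= m + set_mnm T)%MM -> v \in T.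
Proof.
move=> /nbhd_freeP m0 no_outer evw /edge_mnm_le_gt0.
rewrite !mnmDE !set_mnmE => -[mv mw]; apply: contraT => vT.
rewrite (negbTE vT) addn0 in mv.
have vN : v \notin N T by apply: contraTN mv => /m0 ->.
have wT : w \notin T by apply: contraNN vN => /nbhd_edge; apply.
rewrite (negbTE wT) addn0 in mw.
have wN : w \notin N T by apply: contraTN mw => /m0 ->.
case/negP: no_outer; apply/outer_edge_divP; split; first exact/nbhd_freeP.
by exists v, w; split=> //; apply: edge_mnm_le => //; apply: edge_neq.
Qed.

Lemma edge2_div_shift T m : is_triangle e T ->
  ~~ edge2_div e (m + set_mnm T)%MM = nbhd_free e T m && ~~ outer_edge_div e T m.
Proof.
move=> tT; apply/idP/andP => [/(shift_nbhd_free tT)/andP // | [freeT no_outer]].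
apply/negP => /edge2_divP [i [j [k [l [eij ekl le_m]]]]].
have inT x y : e x y -> (edge_mnm x y <= m + set_mnm T)%MM -> x \in T /\ y \in T.
  move=> exy le_xy; split; first exact: (shift_edge_in_triangle freeT no_outer exy le_xy).
  apply: (shift_edge_in_triangle freeT no_outer (_ : e y x)); first by rewrite e_sym.
  by rewrite /edge_mnm addmC.
have [iT jT] := inT _ _ eij (lepm_trans (lem_addr _ _) le_m).
have [kT lT] := inT _ _ ekl (lepm_trans (lem_addl _ _) le_m).
have mT0 : mdeg_on T m = 0%N.
  by move/nbhd_freeP: freeT => m0; rewrite /mdeg_on big1 // => t /mem_nbhd /m0.
have := mdeg_on_le T le_m; rewrite (mdeg_onD _ (edge_mnm i j)) (mdeg_onD _ m).
by rewrite !mdeg_on_edge_mnm // mT0 mdeg_on_set_mnm (eqP (andP tT).1).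
Qed.

End GraphCombinatorics.

Section SymbolicSquare.
Variables (K : fieldType) (n : nat) (e : rel 'I_n).
Hypotheses (e_sym : ssrbool.symmetric e) (e_irr : irreflexive e).
Local Notation poly := {mpoly K[n]}.
Local Notation F := (@edge_ideal K n e).
Implicit Types (p g : poly) (m : 'X_{1..n}) (C J T : {set 'I_n}) (P : pset K n).

Definition var_ideal C : pset K n := mspan (fun m => 0 < mdeg_on C m)%N.

Lemma var_ideal_prime C : prime_ideal (var_ideal C).
Proof.
apply: mspan_prime => [m1 m2 | | m1 m2] /=; rewrite ?mdeg_onD; try lia.
by rewrite /mdeg_on big1 // => i _; rewrite mnm0E.
Qed.

Lemma maxset_indep_nbr J i : maxset (indep e) J -> i \notin J -> exists2 j, j \in J & e i j.
Proof.
move=> /maxsetP [indepJ maxJ] iJ; apply: NNPP => no_nbr.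
suff /maxJ /(_ (subsetUr _ _)) JE : indep e (i |: J) by rewrite -JE setU11 in iJ.
apply/forallP => x; apply/implyP; rewrite !inE => hx.
apply/forallP => y; apply/implyP; rewrite !inE => hy.
case/orP: hx => [/eqP -> | xJ]; case/orP: hy => [/eqP -> | yJ].
- by rewrite e_irr.
- by apply/negP => eiy; apply: no_nbr; exists y.
- by rewrite e_sym; apply/negP => eix; apply: no_nbr; exists x.
- by move: indepJ => /forall_inP /(_ x xJ) /forall_inP /(_ y yJ).
Qed.

(* (F(G) : x_J) is generated by the variables outside J. *)
Lemma edge_div_colon J m : maxset (indep e) J ->
  edge_div e (m + set_mnm J)%MM = (0 < mdeg_on (~: J) m)%N.
Proof.
move=> maxJ; apply/idP/idP => [/edge_divP [i [j [eij le_m]]] | /mdeg_on_gt0 [i]].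
  have [x xij xJ] : exists2 x, (0 < edge_mnm i j x)%N & x \notin J.
    case: (boolP (i \in J)) => iJ; last by exists i; rewrite // edge_mnmE eqxx.
    exists j; first by rewrite edge_mnmE eqxx addn1.
    apply/negP => jJ; move: (maxsetp maxJ) => /forall_inP /(_ i iJ) /forall_inP /(_ j jJ).
    by rewrite eij.
  apply: leq_trans (leq_mdeg_on m (_ : x \in ~: J)); last by rewrite in_setC.
  by move/mnm_lepP: le_m => /(_ x); rewrite mnmDE set_mnmE (negbTE xJ); lia.
rewrite in_setC => iJ mi; have [w wJ eiw] := maxset_indep_nbr maxJ iJ.
apply/edge_divP; exists i, w; split=> //; apply/mnm_lepP => v.
have iw : w != i by apply: contraNneq iJ => <-.
rewrite mnmDE edge_mnmE set_mnmE; case: (i =P v) => [<- | _].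
  by rewrite (negbTE iw) (negbTE iJ); lia.
by case: (w =P v) => [<- | _] //=; rewrite wJ; lia.
Qed.

Lemma var_ideal_Ass J : maxset (indep e) J -> Ass F (var_ideal (~: J)).
Proof.
move=> maxJ; split; first exact: var_ideal_prime.
exists 'X_[set_mnm J] => g; split=> [hg | /edge_idealE hF m hm].
  apply/edge_idealE; apply: (mspanM hg (mspanX (u := eq^~ (set_mnm J)) erefl)).
  by move=> m1 _ h1 ->; rewrite edge_div_colon.
have : (set_mnm J + m)%MM \in msupp (g * 'X_[set_mnm J]).
  by rewrite mcoeff_msupp mcoeffMX -mcoeff_msupp.
by move/hF; rewrite addmC edge_div_colon.
Qed.

Lemma var_ideal_sq C p :
  ideal_sq (var_ideal C) p -> mspan (fun m => 1 < mdeg_on C m)%N p.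
Proof.
apply: ideal_gen_ind => [|a b|c _ _ [a [b [ha [hb ->]]]]]; [exact: mspan0 | exact: mspanD |].
apply: mspanMl; first by move=> m1 m2 h; rewrite mdeg_onD; lia.
by apply: (mspanM ha hb) => m1 m2 /= h1 h2; rewrite mdeg_onD; lia.
Qed.

Lemma Ass_edge_ideal_sub P : Ass F P -> forall g, F g -> P g.
Proof.
move=> [_ [f hf]] g /edge_idealE hg; apply/hf/edge_idealE; rewrite mulrC.
by apply: mspanMl; first exact: edge_div_up.
Qed.

Lemma prime_triangle_vertices P T : prime_ideal P -> (forall g, F g -> P g) ->
  is_triangle e T ->
  exists x y, [/\ x \in T, y \in T, x != y, P 'X_x & P 'X_y].
Proof.
move=> [_ [_ primeP]] FP /triangleP [a [b [c [eab ebc eac ->]]]].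
have edgeP x y : e x y -> P 'X_x \/ P 'X_y.
  by move=> exy; apply: primeP; rewrite mpolyX_edge; apply/FP/edge_ideal_mpolyX.
have := edge_neq e_irr eab; have := edge_neq e_irr ebc; have := edge_neq e_irr eac.
move=> /eqP ac /eqP bc /eqP ab.
have [Pa | Pb] := edgeP _ _ eab.
  have [Pb | Pc] := edgeP _ _ ebc; first by exists a, b; rewrite !inE !eqxx ?orbT.
  by exists a, c; rewrite !inE !eqxx ?orbT.
have [Pa | Pc] := edgeP _ _ eac; first by exists a, b; rewrite !inE !eqxx ?orbT.
by exists b, c; rewrite !inE !eqxx ?orbT.
Qed.

Lemma Ass_sq_symb2_div P m : Ass F P -> symb2_div e m -> ideal_sq P 'X_[m].
Proof.
move=> AssP; have FP := Ass_edge_ideal_sub AssP.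
case/orP => [/edge2_divP [i [j [k [l [eij ekl le_m]]]]] | /triangle_divP [T tT le_m]].
  rewrite (mpolyX_split _ le_m) mpolyXD; apply: ideal_gen_mul => //.
  exists 'X_[edge_mnm i j], 'X_[edge_mnm k l].
  by split; [|split]; try apply/FP/edge_ideal_mpolyX.
have [x [y [xT yT xy Px Py]]] := prime_triangle_vertices AssP.1 FP tT.
have le_xy : (edge_mnm x y <= m)%MM.
  apply: lepm_trans le_m; apply/mnm_lepP => v; rewrite edge_mnmE set_mnmE.
  case: (x =P v) => [<- | _]; first by rewrite eq_sym (negbTE xy) xT.
  by case: (y =P v) => [<- | _] //=; rewrite yT.
rewrite (mpolyX_split _ le_xy) -mpolyX_edge; apply: ideal_gen_mul => //.
by exists 'X_x, 'X_y.
Qed.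

Lemma symb2E p : symb2 F p <-> mspan (symb2_div e) p.
Proof.
split=> [hp m hm | hp P AssP].
  apply/orP; have [//|no_edge2] := boolP (edge2_div e m); [by left | right].
  apply: (cover_deg_triangle_div e_sym e_irr no_edge2) => I indepI.
  have [J maxJ sIJ] := maxset_exists indepI.
  apply: leq_trans (var_ideal_sq (hp _ (var_ideal_Ass maxJ)) hm) (mdeg_onS _ _).
  by rewrite setCS.
apply: mspan_ind; [exact: ideal_gen0 | exact: ideal_genD | |].
  by move=> c a; apply: ideal_genZ.
by move=> m /hp; apply: Ass_sq_symb2_div.
Qed.

End SymbolicSquare.

Section TriangleCount.
Variables (n : nat) (e : rel 'I_n).
Hypotheses (e_sym : ssrbool.symmetric e) (e_irr : irreflexive e).
Implicit Types (T : {set 'I_n}) (d : nat).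

Definition triangle_layer T d :=
  [pred b : 'X_{1..n < d.+1} | [&& mdeg b == d, ~~ edge2_div e b & (set_mnm T <= b)%MM]].

Lemma card_quot_basis_symb2 d : #|quot_basis (symb2_div e) (edge2_div e) d| =
  (\sum_(T | is_triangle e T) #|triangle_layer T d|)%N.
Proof.
pose ntri (b : 'X_{1..n < d.+1}) := (\sum_(T | is_triangle e T) (set_mnm T <= b)%MM : nat)%N.
rewrite -sum1_card (eq_bigr ntri).
  rewrite exchange_big; apply: eq_bigr => T tT; rewrite -sum1_card big_mkcond [RHS]big_mkcond.
  apply: eq_bigr => b _; rewrite !inE.
  case le_b: (set_mnm T <= b)%MM; last by rewrite !andbF; case: ifP.
  have -> : symb2_div e b by apply/orP; right; apply/triangle_divP; exists T.
  by rewrite !andbT.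
move=> b; rewrite inE /ntri => /andP [/andP [_ symb] no_edge2].
case/orP: symb => [edge2 | /triangle_divP [T0 tT0 le_T0]]; first by rewrite edge2 in no_edge2.
rewrite (bigD1 T0) //= le_T0 big1 // => T /andP [tT T0T].
apply/eqP; rewrite eqb0; apply: contra T0T => le_T.
by rewrite (triangle_div_uniq e_sym e_irr no_edge2 tT0 le_T0 tT le_T).
Qed.

Lemma card_triangle_layer T d : is_triangle e T ->
  #|triangle_layer T (d + 3)| = #|quot_basis (nbhd_free e T) (outer_edge_div e T) d|.
Proof.
move=> tT; pose f (b : 'X_{1..n < d.+1}) : 'X_{1..n < (d + 3).+1} :=
  insubd bm0 (val b + set_mnm T)%MM.
have fE (b : 'X_{1..n < d.+1}) : mdeg b = d -> val (f b) = (val b + set_mnm T)%MM.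
  by move=> db; rewrite val_insubd mdegD db (mdeg_triangle tT) ltnSn.
set B := quot_basis _ _ d.
have f_inj : {in B &, injective f}.
  move=> x y; rewrite !inE => /andP [/andP [/eqP dx _] _] /andP [/andP [/eqP dy _] _] fxy.
  by apply/val_inj/(@addIm _ (set_mnm T)); rewrite -fE // -fE // fxy.
rewrite -(card_in_imset f_inj); apply: eq_card => b; apply/idP/imsetP.
  rewrite inE => /and3P [/eqP db no_edge2 le_b].
  have db' : mdeg (val b - set_mnm T)%MM = d.
    move: (mdegD (val b - set_mnm T) (set_mnm T)).
    by rewrite submK // db (mdeg_triangle tT); lia.
  have dlt : (mdeg (val b - set_mnm T)%MM < d.+1)%N by rewrite db'.
  exists (BMultinom dlt); last by apply: val_inj; rewrite fE //= submK.
  move: no_edge2; rewrite -(submK le_b) (edge2_div_shift e_sym e_irr _ tT).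
  by rewrite inE /= db' eqxx.
move=> [b']; rewrite inE => /andP [/andP [/eqP db hT] no_outer] ->.
rewrite inE fE // mdegD db (mdeg_triangle tT) eqxx (edge2_div_shift e_sym e_irr _ tT).
by rewrite hT no_outer lem_addl.
Qed.

Lemma quot_dim_symb2 (z : int) :
  quot_dim (symb2_div e) (edge2_div e) z =
  (\sum_(T | is_triangle e T) quot_dim (nbhd_free e T) (outer_edge_div e T) (z - 3))%N.
Proof.
case hz: (z - 3) => [d|k].
  have -> : z = Posz (d + 3) by lia.
  rewrite /= card_quot_basis_symb2; apply: eq_bigr => T tT.
  exact: card_triangle_layer.
rewrite big1 //; case: z hz => [d|] //= hz; apply: eq_card0 => b; rewrite !inE.
apply/negP => /andP [/andP [/eqP db /orP [edge2 | /triangle_divP [T tT le_T]]] no_edge2].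
  by rewrite edge2 in no_edge2.
by have := lemc_mdeg (lem_leo le_T); rewrite (mdeg_triangle tT) db; lia.
Qed.

End TriangleCount.

Theorem corollary6p9 (K : fieldType) (n : nat) (e : rel 'I_n)
  (e_sym : ssrbool.symmetric e) (e_irr : irreflexive e) (z : int) :
  hilb (symb2 (@edge_ideal K n e)) (ideal_sq (@edge_ideal K n e)) z =
  (\sum_(T : {set 'I_n} | is_triangle e T)
     hilb (@S_T K n e T) (@I_T K n e T) (z - 3))%N.
Proof.
rewrite (hilb_mspan _ (symb2E e_sym e_irr) (@edge_ideal_sqE K n e)).
rewrite (quot_dim_symb2 e_sym e_irr); apply: eq_bigr => T _.
by rewrite (hilb_mspan _ (@S_TE K n e T) (@I_TE K n e T)).
Qed.
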